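(* For every $y\in\mathbf H^1_{\mathbb C}$, $$\lim_{b\to\infty}\mathrm{Cart}\big(g(1,b)y,\,g(1,-b)y,\,y\big)=-\frac{\pi}{2}.$$
   Context: $\mathbf H^1_{\mathbb C}$ is the set of lines $[v]$ in $\mathbb C^2$ with $B(v,v)>0$, where $B(z,w)=z_1\bar w_1-z_2\bar w_2$. Let $\xi_1=(e_1+e_2)/\sqrt2$, $\xi_2=(e_1-e_2)/\sqrt2$, and for $b\in\mathbb R$ let $g(1,b)\in SU(1,1)$ have matrix $\begin{pmatrix}1&ib\\0&1\end{pmatrix}$ in the basis $(\xi_1,\xi_2)$, acting on $\mathbf H^1_{\mathbb C}$. The Cartan argument is $\mathrm{Cart}(x,y,z)=\arg\big(B(\tilde x,\tilde y)B(\tilde y,\tilde z)B(\tilde z,\tilde x)\big)\in(-\pi/2,\pi/2)$ for any lifts $\tilde x,\tilde y,\tilde z$. *)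

From Stdlib Require Import Reals.
From Coquelicot Require Import Coquelicot.
Open Scope R_scope.

Definition C2 := (C * C)%type.

Definition C2add (u v : C2) : C2 := (Cplus (fst u) (fst v), Cplus (snd u) (snd v)).
Definition C2scal (a : C) (v : C2) : C2 := (Cmult a (fst v), Cmult a (snd v)).

Definition B (z w : C2) : C :=
  Cminus (Cmult (fst z) (Cconj (fst w))) (Cmult (snd z) (Cconj (snd w))).

(* v is a lift of a point of H^1_C : B(v,v) > 0 (B(v,v) is real) *)
Definition in_H1 (v : C2) : Prop := 0 < Re (B v v).

Definition e1 : C2 := (RtoC 1, RtoC 0).
Definition e2 : C2 := (RtoC 0, RtoC 1).
Definition xi1 : C2 := C2scal (RtoC (/ sqrt 2)) (C2add e1 e2).
Definition xi2 : C2 := C2scal (RtoC (/ sqrt 2)) (C2add e1 (C2scal (RtoC (-1)) e2)).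

(* coordinates of v in the basis (xi1, xi2) *)
Definition xcoord1 (v : C2) : C := Cmult (RtoC (/ sqrt 2)) (Cplus (fst v) (snd v)).
Definition xcoord2 (v : C2) : C := Cmult (RtoC (/ sqrt 2)) (Cminus (fst v) (snd v)).

(* g(1,b): matrix [[1, i b],[0, 1]] in the basis (xi1, xi2), acting on C^2 *)
Definition g1 (b : R) (v : C2) : C2 :=
  let c1 := xcoord1 v in
  let c2 := xcoord2 v in
  C2add (C2scal (Cplus c1 (Cmult (0, b) c2)) xi1) (C2scal c2 xi2).

(* principal argument in (-PI, PI] (atan2 convention) *)
Definition Carg (z : C) : R :=
  let x := Re z in let y := Im z in
  match Rlt_dec 0 x with
  | left _ => atan (y / x)
  | right _ =>
    match Rlt_dec x 0 with
    | left _ => if Rle_dec 0 y then atan (y / x) + PI else atan (y / x) - PI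
    | right _ =>
      match Rlt_dec 0 y with
      | left _ => PI / 2
      | right _ => if Rlt_dec y 0 then - (PI / 2) else 0
      end
    end
  end.

(* Cartan angular invariant, computed on lifts x, y, z *)
Definition Cart (x y z : C2) : R :=
  Carg (Cmult (Cmult (B x y) (B y z)) (B z x)).

(** In the basis (xi1, xi2) the form reads B(z, w) = c1(z) conj c2(w) + c2(z) conj c1(w),
    and g(1,b) adds i b c2 to c1.  Hence B(g(1,b) y, g(1,c) y) = B(y,y) + i (b - c) |c2(y)|^2,
    and with D = B(y,y) > 0, t = b |c2(y)|^2 the triple product is
    (D + 2 i t)(D - i t)^2 = D^3 + 3 D t^2 - 2 i t^3.  Its real part is positive, so its
    argument is - atan (2 t^3 / (D^3 + 3 D t^2)), which tends to - pi/2 as t grows. *)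

From Stdlib Require Import Reals Lra.
From Coquelicot Require Import Coquelicot.
Open Scope R_scope.

Lemma Carg_re_pos z : 0 < Re z -> Carg z = atan (Im z / Re z).
Proof. intros Hz; unfold Carg; destruct (Rlt_dec 0 (Re z)); [reflexivity | lra]. Qed.

Lemma atan_pinfty : is_lim atan p_infty (PI / 2).
Proof.
  apply (is_lim_ext_loc (fun x => PI / 2 - atan (/ x))).
  - exists 0; intros x Hx; rewrite atan_inv by lra; ring.
  - enough (H : is_lim (fun x => PI / 2 - atan (/ x)) p_infty (PI / 2 - atan 0))
      by (rewrite atan_0, Rminus_0_r in H; exact H).
    apply is_lim_minus'; [apply is_lim_const |].
    apply is_lim_comp_continuous; [| apply continuous_atan].
    replace (Finite 0) with (Rbar_inv p_infty) by reflexivity.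
    apply is_lim_inv; [apply is_lim_id | discriminate].
Qed.

Lemma is_lim_scal_r_pinfty (f : R -> R) (a : R) (x : Rbar) :
  0 < a -> is_lim f x p_infty -> is_lim (fun y => f y * a) x p_infty.
Proof.
  intros Ha Hf.
  replace p_infty with (Rbar_mult p_infty a)
    by (apply is_Rbar_mult_unique, is_Rbar_mult_p_infty_pos; simpl; lra).
  now apply is_lim_scal_r.
Qed.

Lemma cubic_den_pos D t : 0 < D -> 0 < D ^ 3 + 3 * D * t ^ 2.
Proof.
  intros HD; assert (0 < D ^ 3) by (apply pow_lt; lra).
  assert (0 <= t ^ 2) by (rewrite <- Rsqr_pow2; apply Rle_0_sqr).
  nra.
Qed.

Lemma cubic_ratio_pinfty D :
  0 < D -> is_lim (fun t => 2 * t ^ 3 / (D ^ 3 + 3 * D * t ^ 2)) p_infty p_infty.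
Proof.
  intros HD.
  apply (is_lim_le_p_loc (fun t => t * / (2 * D))).
  - exists D; intros t Ht.
    assert (Hden := cubic_den_pos D t HD).
    apply (Rmult_le_reg_r (2 * D * (D ^ 3 + 3 * D * t ^ 2))); [nra |].
    replace (t * / (2 * D) * (2 * D * (D ^ 3 + 3 * D * t ^ 2)))
      with (t * (D ^ 3 + 3 * D * t ^ 2)) by (field; lra).
    replace (2 * t ^ 3 / (D ^ 3 + 3 * D * t ^ 2) * (2 * D * (D ^ 3 + 3 * D * t ^ 2)))
      with (4 * D * t ^ 3) by (field; lra).
    assert (0 <= D * t * (t - D) * (t + D)) by (repeat apply Rmult_le_pos; lra).
    nra.
  - apply is_lim_scal_r_pinfty; [apply Rinv_0_lt_compat; lra | apply is_lim_id].
Qed.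

Lemma Rinv_sqrt2_pow2 : (/ sqrt 2) ^ 2 = / 2.
Proof. rewrite pow_inv, <- Rsqr_pow2, Rsqr_sqrt; lra. Qed.

Definition xi2_norm2 (v : C2) : R := Re (Cmult (xcoord2 v) (Cconj (xcoord2 v))).

Lemma xi2_norm2_coords x1 y1 x2 y2 :
  xi2_norm2 ((x1, y1), (x2, y2)) = ((x1 - x2) ^ 2 + (y1 - y2) ^ 2) / 2.
Proof.
  unfold xi2_norm2, xcoord2; simpl.
  pose proof Rinv_sqrt2_pow2 as Ht; set (t := / sqrt 2) in *.
  ring_simplify; rewrite Ht; field.
Qed.

Lemma xi2_norm2_pos y : in_H1 y -> 0 < xi2_norm2 y.
Proof.
  destruct y as [[x1 y1] [x2 y2]]; rewrite xi2_norm2_coords.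
  unfold in_H1, B, Cminus, Cplus, Cmult, Copp, Cconj; simpl; intros hy.
  assert (Hne : (x1 - x2)² + (y1 - y2)² <> 0).
  { intros H0; apply Rplus_sqr_eq_0 in H0 as [Hx Hy].
    replace x1 with x2 in hy by lra; replace y1 with y2 in hy by lra; lra. }
  assert (Hge : 0 <= (x1 - x2)² + (y1 - y2)²)
    by (apply Rplus_le_le_0_compat; apply Rle_0_sqr).
  unfold Rsqr in *; apply Rdiv_lt_0_compat; [| lra].
  destruct Hge as [Hgt | Heq]; [nra | congruence].
Qed.

Lemma g1_coords b x1 y1 x2 y2 :
  g1 b ((x1, y1), (x2, y2)) =
  ((x1 - b / 2 * (y1 - y2), y1 + b / 2 * (x1 - x2)),
   (x2 - b / 2 * (y1 - y2), y2 + b / 2 * (x1 - x2))).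
Proof.
  unfold g1, C2add, C2scal, xcoord1, xcoord2, xi1, xi2, e1, e2; simpl.
  unfold Cplus, Cmult, Cminus, Copp, RtoC; simpl.
  pose proof Rinv_sqrt2_pow2 as Ht; set (t := / sqrt 2) in *.
  f_equal; f_equal; ring_simplify; rewrite Ht; field.
Qed.

Lemma g1_0 v : g1 0 v = v.
Proof.
  destruct v as [[x1 y1] [x2 y2]]; rewrite g1_coords.
  f_equal; f_equal; field.
Qed.

Lemma B_g1_g1 v b c :
  B (g1 b v) (g1 c v) = (Re (B v v), (b - c) * xi2_norm2 v).
Proof.
  destruct v as [[x1 y1] [x2 y2]].
  rewrite !g1_coords, xi2_norm2_coords.
  unfold B, Cminus, Cplus, Cmult, Copp, Cconj; simpl.
  f_equal; field.
Qed.

Lemma B_g1_l v b : B (g1 b v) v = (Re (B v v), b * xi2_norm2 v).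
Proof. rewrite <- (g1_0 v) at 2; rewrite B_g1_g1; f_equal; ring. Qed.

Lemma B_g1_r v c : B v (g1 c v) = (Re (B v v), - c * xi2_norm2 v).
Proof. rewrite <- (g1_0 v) at 1; rewrite B_g1_g1; f_equal; ring. Qed.

Lemma Cart_g1 y b :
  let D := Re (B y y) in
  let t := b * xi2_norm2 y in
  Cart (g1 b y) (g1 (- b) y) y = Carg (D ^ 3 + 3 * D * t ^ 2, - (2 * t ^ 3)).
Proof.
  intros D t; unfold Cart.
  rewrite B_g1_g1, B_g1_l, B_g1_r.
  f_equal; unfold Cmult, D, t; simpl; f_equal; ring.
Qed.

Theorem mainTheorem16 (y : C2) (hy : in_H1 y) :
  is_lim (fun b : R => Cart (g1 b y) (g1 (- b) y) y) p_infty (- (PI / 2)).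
Proof.
  set (D := Re (B y y)); set (e := xi2_norm2 y).
  assert (HD : 0 < D) by exact hy.
  assert (He : 0 < e) by (apply xi2_norm2_pos, hy).
  set (r := fun t => 2 * t ^ 3 / (D ^ 3 + 3 * D * t ^ 2)).
  apply (is_lim_ext_loc (fun b => - atan (r (b * e)))).
  - exists 0; intros b _.
    assert (Hden := cubic_den_pos D (b * e) HD).
    rewrite Cart_g1, Carg_re_pos by exact Hden; cbn [Re Im fst snd].
    rewrite <- atan_opp; f_equal; unfold r; fold D e.
    field; lra.
  - apply (is_lim_opp (fun b => atan (r (b * e))) p_infty (PI / 2)).
    apply (is_lim_comp atan _ _ _ p_infty); [exact atan_pinfty | | now exists 0].
    apply (is_lim_comp r _ _ _ p_infty); [exact (cubic_ratio_pinfty D HD) | | now exists 0].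
    exact (is_lim_scal_r_pinfty _ _ _ He (is_lim_id p_infty)).
Qed.
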